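(* Let $K$ be a valued field and $d\ge 1$. Then the family $\operatorname{Conv}_{K^d}$ of convex subsets of $K^d$ has breadth exactly $d$: whenever $C_1,\dots,C_n\subseteq K^d$ are convex with $\bigcap_{i=1}^nC_i\ne\emptyset$, there is $S\subseteq\{1,\dots,n\}$ with $|S|\le d$ and $\bigcap_{i\in S}C_i=\bigcap_{i=1}^nC_i$; and $d$ is the least number with this property.
   Context: $K$ is a field with valuation $\nu$ and valuation ring $\mathcal{O}=\{x:\nu(x)\ge0\}$. A set $X\subseteq K^d$ is convex if it is closed under combinations $\sum_{i=1}^n\alpha_ix_i$ with $x_i\in X$, $\alpha_i\in\mathcal{O}$, $\sum\alpha_i=1$. A family $\mathcal{F}$ of subsets of a set has breadth $d$ if every nonempty intersection of finitely many members of $\mathcal{F}$ equals the intersection of at most $d$ of them, and $d$ is minimal with this property. *)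

From mathcomp Require Import all_boot all_order all_algebra.
Set Implicit Arguments. Unset Strict Implicit. Unset Printing Implicit Defensive.
Import GRing.Theory.
Local Open Scope ring_scope.

Definition ordered_abelian_group (G : zmodType) (le : rel G) : Prop :=
  [/\ reflexive le, antisymmetric le, transitive le, total le &
      forall x y z : G, le x y -> le (x + z) (y + z)].

(* Γ ∪ {∞}, with ∞ represented by None. *)
Definition ole (G : zmodType) (le : rel G) (a b : option G) : bool :=
  match a, b with
  | _, None => true
  | None, Some _ => false
  | Some x, Some y => le x y
  end.

Definition oadd (G : zmodType) (a b : option G) : option G :=
  match a, b with
  | Some x, Some y => Some (x + y)
  | _, _ => None
  end.

Definition is_valuation (K : fieldType) (G : zmodType) (le : rel G)
    (nu : K -> option G) : Prop :=
  [/\ forall x, nu x = None <-> x = 0,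
      forall x y, nu (x * y) = oadd (nu x) (nu y) &
      forall x y, ole le (nu x) (nu (x + y)) || ole le (nu y) (nu (x + y))].

Definition val_ring (K : fieldType) (G : zmodType) (le : rel G)
    (nu : K -> option G) (x : K) : Prop := ole le (Some 0) (nu x).

Definition convex (K : fieldType) (G : zmodType) (le : rel G)
    (nu : K -> option G) (d : nat) (X : 'rV[K]_d -> Prop) : Prop :=
  forall (n : nat) (x : 'I_n -> 'rV[K]_d) (alpha : 'I_n -> K),
    (forall i, X (x i)) -> (forall i, val_ring le nu (alpha i)) ->
    \sum_(i < n) alpha i = 1 ->
    X (\sum_(i < n) alpha i *: x i).

Definition breadth_le (T : Type) (F : (T -> Prop) -> Prop) (m : nat) : Prop :=
  forall (n : nat) (C : 'I_n -> T -> Prop),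
    (forall i, F (C i)) ->
    (exists x, forall i, C i x) ->
    exists S : {set 'I_n}, (#|S| <= m)%N /\
      (forall x, (forall i, i \in S -> C i x) <-> (forall i, C i x)).

Definition breadth (T : Type) (F : (T -> Prop) -> Prop) (m : nat) : Prop :=
  breadth_le F m /\ forall m', (m' < m)%N -> ~ breadth_le F m'.

From mathcomp Require Import all_boot all_order all_algebra.
From Stdlib Require Import Classical.
Set Implicit Arguments. Unset Strict Implicit. Unset Printing Implicit Defensive.
Import GRing.Theory.
Local Open Scope ring_scope.

(* Upper bound (a Helly-type argument).  If C is convex and p lies in C, the
   displacements y with p + y in C form an O-submodule of K^d.  Given n > d
   convex sets through a common point p, pick points x_j lying in every C_i
   except C_j.  The n > d vectors x_i - p are linearly dependent over K;
   dividing a nontrivial relation by a coefficient of least valuation writes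
   some x_j - p as an O-combination of the others, all of which lie in the
   module attached to C_j; hence x_j lies in C_j, a contradiction.  So one set
   of the family is redundant, and induction on n reduces to at most d sets.

   Lower bound.  The d coordinate hyperplanes are convex, meet in 0, and any
   d - 1 of them contain a nonzero point outside the remaining one. *)

(* Any total transitive relation on a nonempty finite type has a least
   element: the head of the sorted enumeration. *)
Lemma exists_least (I : finType) (r : rel I) :
  total r -> transitive r -> I -> exists j, forall k, r j k.
Proof.
move=> r_tot r_tr i0.
have r_refl j : r j j by have := r_tot j j; rewrite orbb.
have s_sorted := sort_sorted r_tot (enum I).
have mem_s k : k \in sort r (enum I) by rewrite mem_sort mem_enum.
move: s_sorted mem_s; case: (sort r (enum I)) => [|j s] s_sorted mem_s.
  by have := mem_s i0.
exists j => k; have := mem_s k; rewrite inE => /predU1P [->|ks] //.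
by have /allP := order_path_min r_tr s_sorted; apply.
Qed.

Lemma rows_dependent (F : fieldType) m n (A : 'M[F]_(m, n)) :
  (n < m)%N -> exists2 c : 'rV_m, c != 0 & c *m A = 0.
Proof.
move=> lt_nm; have : ~~ row_free A.
  by rewrite /row_free neq_ltn (leq_ltn_trans (rank_leq_col A) lt_nm).
by rewrite -kermx_eq0 => /rowV0Pn [c /sub_kermxP cA c0]; exists c.
Qed.

Section ValuationRing.
Variables (K : fieldType) (G : zmodType) (le : rel G) (nu : K -> option G).
Hypotheses (le_group : ordered_abelian_group le) (nu_val : is_valuation le nu).

Lemma ole_refl : reflexive (ole le).
Proof. by case: le_group => refl _ _ _ _ [x|] /=. Qed.

Lemma ole_trans : transitive (ole le).
Proof.
case: le_group => _ _ tr _ _ [y|] [x|] [z|] //=; exact: tr.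
Qed.

Lemma ole_total : total (ole le).
Proof. by case: le_group => _ _ _ tot _ [x|] [y|] //=. Qed.

Lemma nu_eq0 x : nu x = None <-> x = 0.
Proof. by case: nu_val. Qed.

Lemma nu_neq0 x : x != 0 -> exists a, nu x = Some a.
Proof.
move=> /eqP x0; case E: (nu x) => [a|]; first by exists a.
by move/nu_eq0: E.
Qed.

Lemma nuM x y : nu (x * y) = oadd (nu x) (nu y).
Proof. by case: nu_val. Qed.

(* nu 1 = 0, since nu 1 = nu 1 + nu 1 and G is cancellative. *)
Lemma nu1 : nu 1 = Some 0.
Proof.
have [a E] := nu_neq0 (oner_neq0 K).
have := nuM 1 1; rewrite mulr1 E /= => -[aa].
by congr Some; apply: (@addrI _ a); rewrite addr0 -aa.
Qed.

(* nu (-1) = 0: its value b satisfies b + b = 0, forcing b = 0 in an ordered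
   group. *)
Lemma nuN1 : nu (-1) = Some 0.
Proof.
have [b E] : exists b, nu (-1) = Some b.
  by apply: nu_neq0; rewrite oppr_eq0 oner_neq0.
have := nuM (-1) (-1); rewrite mulrNN mulr1 nu1 E /= => -[bb].
case: le_group => _ anti _ tot monoD; congr Some.
by case/orP: (tot 0 b) => h; have := monoD _ _ b h;
  rewrite add0r -bb => h'; apply: anti; rewrite h h'.
Qed.

Notation O := (val_ring le nu).

Lemma val_ring0 : O 0.
Proof. by rewrite /val_ring (proj2 (nu_eq0 0)). Qed.

Lemma val_ring1 : O 1.
Proof. by rewrite /val_ring nu1 ole_refl. Qed.

Lemma val_ringN x : O x -> O (- x).
Proof. by rewrite /val_ring -mulN1r nuM nuN1; case: (nu x) => //= a; rewrite add0r. Qed.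

Lemma val_ringD x y : O x -> O y -> O (x + y).
Proof.
rewrite /val_ring => Ox Oy; case: nu_val => _ _ /(_ x y) /orP [] h.
- exact: ole_trans Ox h.
- exact: ole_trans Oy h.
Qed.

Lemma val_ringB x y : O x -> O y -> O (x - y).
Proof. by move=> Ox Oy; apply: val_ringD => //; apply: val_ringN. Qed.

Lemma val_ring_div x y : y != 0 -> ole le (nu y) (nu x) -> O (x / y).
Proof.
move=> y0; have [b Eb] := nu_neq0 y0.
rewrite -{1}(divfK y0 x) nuM Eb /val_ring; case: (nu (x / y)) => //= a h.
case: le_group => _ _ _ _ monoD; have := monoD _ _ (- b) h.
by rewrite subrr addrK.
Qed.

(* O-dependence: among more than d vectors of K^d, one is an O-combination
   of the others.  Take a nontrivial K-linear relation and divide it by a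
   coefficient of least valuation. *)
Lemma val_ring_dependence d n (y : 'I_n -> 'rV[K]_d) : (d < n)%N ->
  exists j (b : 'I_n -> K),
    (forall i, O (b i)) /\ y j = \sum_(i | i != j) b i *: y i.
Proof.
move=> lt_dn; pose A := \matrix_i y i.
have [c c_neq0 cA] := rows_dependent A lt_dn.
have [k ck] := rV0Pn _ c_neq0.
have [j j_least] := exists_least (r := fun a b => ole le (nu (c 0 a)) (nu (c 0 b)))
  (fun a b => ole_total _ _) (fun b a e => @ole_trans _ _ _) k.
have cj : c 0 j != 0.
  apply: contraNneq ck => cj0; apply/eqP/nu_eq0; have := j_least k.
  by rewrite cj0 (proj2 (nu_eq0 0)) //; case: (nu (c 0 k)).
exists j, (fun i => - (c 0 i / c 0 j)); split.
  by move=> i; apply/val_ringN/val_ring_div.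
have : \sum_i c 0 i *: y i = 0.
  by rewrite -[RHS]cA mulmx_sum_row; apply: eq_bigr => i _; rewrite rowK.
rewrite (bigD1 j) //= => /eqP; rewrite addr_eq0 => /eqP cyj.
rewrite -[y j](scalerK cj) cyj scalerN scaler_sumr -sumrN.
by apply: eq_bigr => i _; rewrite scalerA scaleNr mulrC.
Qed.

End ValuationRing.

Section ConvexModule.
Variables (K : fieldType) (G : zmodType) (le : rel G) (nu : K -> option G).
Hypotheses (le_group : ordered_abelian_group le) (nu_val : is_valuation le nu).
Variables (d : nat) (C : 'rV[K]_d -> Prop).
Hypothesis C_convex : convex le nu C.

Notation O := (val_ring le nu).

Lemma convex3 u v w a b c : C u -> C v -> C w ->
  O a -> O b -> O c -> a + b + c = 1 -> C (a *: u + b *: v + c *: w).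
Proof.
move=> Cu Cv Cw Oa Ob Oc abc1.
have := C_convex (x := fun i : 'I_3 => nth 0 [:: u; v; w] i)
                 (alpha := fun i : 'I_3 => nth 0 [:: a; b; c] i).
rewrite !big_ord_recl !big_ord0 /= !addr0 !addrA; apply => //.
- by case=> [[|[|[|?]]] ?].
- by case=> [[|[|[|?]]] ?].
Qed.

Variable p : 'rV[K]_d.
Hypothesis Cp : C p.

Lemma convex_displD y z : C (p + y) -> C (p + z) -> C (p + (y + z)).
Proof.
move=> Cy Cz.
have -> : p + (y + z) = 1 *: (p + y) + 1 *: (p + z) + (-1) *: p.
  by rewrite !scale1r scaleN1r (addrC p z) !addrA addrK.
have O1 := val_ring1 le_group nu_val.
by apply: convex3 => //; [exact: val_ringN | rewrite addrK].
Qed.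

Lemma convex_displZ a y : O a -> C (p + y) -> C (p + a *: y).
Proof.
move=> Oa Cy.
have -> : p + a *: y = a *: (p + y) + (1 - a) *: p + 0 *: p.
  by rewrite scale0r addr0 scalerDr scalerBl scale1r [RHS]addrC addrA subrK.
apply: convex3 => //; first exact: val_ringB (val_ring1 _ _) Oa.
- exact: val_ring0.
- by rewrite addr0 addrC subrK.
Qed.

Lemma convex_displ_sum (I : finType) (P : pred I) (b : I -> K) (y : I -> 'rV[K]_d) :
  (forall i, O (b i)) -> (forall i, P i -> C (p + y i)) ->
  C (p + \sum_(i | P i) b i *: y i).
Proof.
move=> Ob Cy; apply: (big_ind (fun v => C (p + v))); first by rewrite addr0.
- exact: convex_displD.
- by move=> i Pi; apply: convex_displZ; [apply: Ob | apply: Cy].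
Qed.

End ConvexModule.

Section Breadth.
Variables (K : fieldType) (G : zmodType) (le : rel G) (nu : K -> option G).
Variable d : nat.

Lemma redundant_convex_set n (C : 'I_n -> 'rV[K]_d -> Prop) p :
  ordered_abelian_group le -> is_valuation le nu -> (d < n)%N ->
  (forall i, convex le nu (C i)) -> (forall i, C i p) ->
  exists j, forall x, (forall i, i != j -> C i x) -> C j x.
Proof.
move=> le_group nu_val lt_dn C_convex Cp; apply: NNPP => no_redundant.
have witness j : exists2 x, (forall i, i != j -> C i x) & ~ C j x.
  apply: NNPP => no_x; apply: no_redundant; exists j => x Cx.
  by apply: NNPP => Cjx; apply: no_x; exists x.
have [x x_others x_notj] := fin_all_exists2 witness.
have [j [b [Ob xj]]] :=
  val_ring_dependence le_group nu_val (fun i => x i - p) lt_dn.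
apply: (x_notj j); rewrite -(subrK p (x j)) addrC xj.
apply: (convex_displ_sum le_group nu_val (C_convex j) (Cp j)) => // i ij.
by rewrite addrC subrK; apply: x_others; rewrite eq_sym.
Qed.

Lemma convex_breadth_le :
  ordered_abelian_group le -> is_valuation le nu ->
  breadth_le (convex le nu (d:=d)) d.
Proof.
move=> le_group nu_val n; elim: n => [|n IH] C C_convex [p Cp].
  by exists set0; rewrite cards0; split => // x; split => _ [].
have [le_nd|lt_dn] := leqP n.+1 d.
  exists setT; rewrite cardsT card_ord; split => // x.
  by split => [Cx i | Cx i _]; [apply: Cx; rewrite inE | apply: Cx].
have [j Cj_redundant] := redundant_convex_set le_group nu_val lt_dn C_convex Cp.
have [S [S_small S_eq]] :=
  IH (fun i => C (lift j i)) (fun i => C_convex _) (ex_intro _ p (fun i => Cp _)).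
exists (lift j @: S); split; first exact: leq_trans (leq_imset_card _ _) S_small.
move=> x; split => [CSx|Cx i _]; last exact: Cx.
have C_others i : i != j -> C i x.
  rewrite eq_sym => /unlift_some [i' -> _]; apply: (S_eq x).1 => k kS.
  by apply: CSx; apply: imset_f.
by move=> i; case: (eqVneq i j) => [->|]; [apply: Cj_redundant | apply: C_others].
Qed.

Lemma convex_breadth_gt m : (m < d)%N -> ~ breadth_le (convex le nu (d:=d)) m.
Proof.
move=> lt_md breadth_m.
have [||S [S_small S_eq]] := breadth_m d (fun i (x : 'rV[K]_d) => x 0 i = 0).
- move=> i n x alpha xi _ _; rewrite summxE; apply: big1 => k _.
  by rewrite mxE xi mulr0.
- by exists 0 => i; rewrite mxE.
have : (0 < #|~: S|)%N.
  by rewrite cardsCs setCK card_ord subn_gt0 (leq_ltn_trans S_small).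
case/card_gt0P => j; rewrite inE => jS.
pose e : 'rV[K]_d := \row_k (k == j)%:R.
suff : e 0 j = 0 by rewrite mxE eqxx; apply/eqP/oner_neq0.
apply: (S_eq e).1 => i iS.
by rewrite mxE; case: eqVneq => // ij; rewrite -ij iS in jS.
Qed.

End Breadth.

Theorem theorem4p3 (K : fieldType) (G : zmodType) (le : rel G)
    (nu : K -> option G) (d : nat) :
  ordered_abelian_group le -> is_valuation le nu -> (1 <= d)%N ->
  breadth (convex le nu (d:=d)) d.
Proof.
move=> le_group nu_val _; split; first exact: convex_breadth_le.
by move=> m lt_md; apply: convex_breadth_gt.
Qed.
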